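(* Let $p$ be a prime, $F\in\{L^p,Z^p\}$, and let $G,G'$ be finite $p$-groups with $P_1^F(G)=P_1^F(G')$ and $P_2^F(G)=P_2^F(G')$. Then $|G|=|G'|$.
   Context: Lower $p$-central series: $L^p_1(G)=G$, $L^p_{i+1}(G)=[L^p_i(G),G](L^p_i(G))^p$. Upper $p$-central series: $Z^p_0(G)=1$, $Z^p_{i+1}(G)=$ the elements of order $\le p$ in the preimage in $G$ of $Z(G/Z^p_i(G))$ (for finite $p$-groups, the preimage of $\Omega_1(Z(G/Z^p_i(G)))$). Convention for the persistence matrix: for $F=L^p$ let $m$ be least with $L^p_{m+1}(G)=1$ and put $Q_k=G/L^p_{m+2-k}(G)$, $k=1,\dots,m$; for $F=Z^p$ let $m$ be least with $Z^p_m(G)=G$ and put $Q_k=G/Z^p_{k-1}(G)$, $k=1,\dots,m$. The degree-$n$ persistence matrix $P_n^F(G)=(p_{k,l})_{1\le k,l\le m}$ is upper triangular with $p_{k,l}$ ($k\le l$) equal to the $\mathbb F_p$-dimension of the image of the map $H_n(Q_k,\mathbb F_p)\to H_n(Q_l,\mathbb F_p)$ induced by the natural surjection, and $p_{k,l}=0$ for $k>l$. Equality of matrices includes equality of sizes. *)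

From HB Require Import structures.
From mathcomp Require Import all_boot all_order all_algebra all_fingroup all_solvable.
Set Implicit Arguments. Unset Strict Implicit. Unset Printing Implicit Defensive.
Import GRing.Theory.

Local Open Scope ring_scope.

Section BarComplex.
Variable p : nat.

(* n-chains of the (inhomogeneous) bar complex of the finite group gT
   (the whole type gT), with trivial coefficients in F_p:
   row vectors indexed by n-tuples of elements of gT. *)
Definition tup (gT : finGroupType) (n : nat) := {ffun 'I_n -> gT}.

(* k-th face map d_k : G^(n+1) -> G^n, k = 0..n+1:
   d_0 drops g_1, d_k (0<k<n+1) multiplies g_k g_(k+1), d_(n+1) drops g_(n+1). *)
Definition face (gT : finGroupType) (n k : nat) (f : tup gT n.+1) : tup gT n :=
  [ffun j : 'I_n => if (j.+1 < k)%N then f (inord j)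
                    else if j.+1 == k then (f (inord j) * f (inord j.+1))%g
                    else f (inord j.+1)].

(* boundary matrix d_(n+1) : C_(n+1) -> C_n (acting on row vectors) *)
Definition bd (gT : finGroupType) (n : nat) :
    'M['F_p]_(#|{: tup gT n.+1}|, #|{: tup gT n}|) :=
  \matrix_(i < #|{: tup gT n.+1}|)
     (\sum_(k < n.+2) ((-1) ^+ k) *: delta_mx 0 (enum_rank (face k (enum_val i)))).

Definition cycles (gT : finGroupType) (n : nat) : 'M['F_p]_(#|{: tup gT n}|) :=
  match n return 'M['F_p]_(#|{: tup gT n}|) with
  | 0 => 1%:M
  | m.+1 => kermx (bd gT m)
  end.

Definition mapmx (gT rT : finGroupType) (n : nat) (f : gT -> rT) :
    'M['F_p]_(#|{: tup gT n}|, #|{: tup rT n}|) :=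
  \matrix_(i < #|{: tup gT n}|) delta_mx 0 (enum_rank [ffun j => f (enum_val i j)]).

(* dim_F_p of the image of H_n(f) : H_n(gT, F_p) -> H_n(rT, F_p):
   dim (f_*(Z_n) + B_n') - dim B_n'. *)
Definition himg (gT rT : finGroupType) (n : nat) (f : gT -> rT) : nat :=
  (\rank (cycles gT n *m mapmx n f + bd rT n)%MS - \rank (bd rT n))%N.

End BarComplex.

Section PCentral.
Local Open Scope group_scope.
Variables (p : nat) (gT : finGroupType).

(* natural surjection G/N1 -> G/N2 (for N1 <= N2), on the groups G/Ni viewed as
   finite group types subg_of (G/Ni). *)
Definition qmap (G N1 N2 : {group gT}) :
    subg_of (G / N1)%G -> subg_of (G / N2)%G :=
  fun x => subg (G / N2)%G (coset N2 (repr (sgval x))).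

(* lpcs G i = L^p_(i+1)(G) *)
Fixpoint lpcs (G : {group gT}) (i : nat) : {group gT} :=
  if i is j.+1 then
    (<<[~: lpcs G j, G] :|: [set (x ^+ p)%g | x in lpcs G j]>>)%G
  else G.

(* upcs G i = Z^p_i(G) *)
Fixpoint upcs (G : {group gT}) (i : nat) : {group gT} :=
  if i is j.+1 then
    (coset (upcs G j) @*^-1
       <<[set x in 'Z(G / upcs G j) | (x ^+ p == 1)%g]>>)%G
  else 1%G.

(* least m with L^p_(m+1)(G) = 1 (search bounded by |G|, enough for p-groups) *)
Definition m_low (G : {group gT}) : nat :=
  find (fun i => lpcs G i :==: 1%g) (iota 0 #|G|.+1).

(* least m with Z^p_m(G) = G *)
Definition m_up (G : {group gT}) : nat :=
  find (fun i => upcs G i :==: G) (iota 0 #|G|.+1).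

(* persistence matrix with rows/columns indexed 0..m-1 (k0 = k-1),
   N k0 the normal subgroup with Q_(k0+1) = G / N k0 *)
Definition pmat (n : nat) (G : {group gT}) (m : nat) (N : nat -> {group gT}) :
    seq (seq nat) :=
  mkseq (fun k => mkseq (fun l =>
     if (k <= l)%N then himg p n (@qmap G (N k) (N l)) else 0%N) m) m.

End PCentral.

Inductive pcseries := Lower | Upper.

Definition persistence (p : nat) (F : pcseries) (n : nat) (gT : finGroupType)
    (G : {group gT}) : seq (seq nat) :=
  match F with
  | Lower => let m := m_low p G in
             (* Q_k = G / L^p_(m+2-k), k = k0+1 *)
             pmat p n G m (fun k0 => lpcs p G (m - k0))
  | Upper => (* Q_k = G / Z^p_(k-1), k = k0+1 *)
             pmat p n G (m_up p G) (fun k0 => upcs p G k0)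
  end.

From HB Require Import structures.
From mathcomp Require Import all_boot all_order all_algebra all_fingroup all_solvable.
From mathcomp Require Import mxabelem zify.

(* If f : Q -> R is a surjection of finite groups whose kernel M is central of
   exponent p, the five-term exact sequence in homology with F_p coefficients,
     H_2(Q) -> H_2(R) -> M -> H_1(Q) -> H_1(R) -> 0,
   gives log_p |M| = (dim H_2(R) - rk H_2(f)) + (dim H_1(Q) - rk H_1(f)).
   Consecutive quotients G/N_k -> G/N_(k+1) along the lower or upper p-central
   series are such surjections with kernel N_(k+1)/N_k, and the four numbers are
   diagonal and superdiagonal entries of P_1 and P_2.  Summing over the series
   writes log_p |G| as a function of P_1 and P_2 alone. *)

Set Implicit Arguments.
Unset Strict Implicit.
Unset Printing Implicit Defensive.

Import GRing.Theory.
Local Open Scope ring_scope.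

Definition mxhimg (F : fieldType) m n k l
    (Z : 'M[F]_(m, n)) (f : 'M_(n, k)) (B : 'M_(l, k)) : nat :=
  (\rank (Z *m f + B)%MS - \rank B)%N.

Lemma mxhimg_full (F : fieldType) m n k l
    (Z : 'M[F]_(m, n)) (f : 'M_(n, k)) (B : 'M_(l, k)) :
  row_full Z -> row_full f -> mxhimg Z f B = (k - \rank B)%N.
Proof.
move=> fZ ff; rewrite /mxhimg.
have /eqP -> // : row_full (Z *m f + B)%MS.
by rewrite -sub1mx (submx_trans _ (addsmxSl _ _)) // (eqmxMfull f fZ) sub1mx.
Qed.

(* The rank count behind the exact sequence
     H_2(C) -> H_2(B) -> ker f_1 / d_2(ker f_2) -> H_1(C) -> H_1(B) -> 0
   of a surjective chain map f : C -> B acting on row vectors; the rows of [Z1]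
   span the 1-cycles of C, which are all the 1-chains. *)
Section HomologyLadder.
Variables (F : fieldType) (z1 c1 c2 c3 b1 b2 b3 : nat) (Z1 : 'M[F]_(z1, c1)).
Variables (d2 : 'M[F]_(c2, c1)) (d3 : 'M[F]_(c3, c2)).
Variables (e2 : 'M[F]_(b2, b1)) (e3 : 'M[F]_(b3, b2)).
Variables (f1 : 'M[F]_(c1, b1)) (f2 : 'M[F]_(c2, b2)) (f3 : 'M[F]_(c3, b3)).
Hypotheses (fZ1 : row_full Z1) (d3d2 : d3 *m d2 = 0).
Hypotheses (f1d2 : d2 *m f1 = f2 *m e2) (f2d3 : d3 *m f2 = f3 *m e3).
Hypotheses (ff1 : row_full f1) (ff2 : row_full f2) (ff3 : row_full f3).

Lemma boundary_sub_image m (X : 'M_(m, c2)) : (d3 <= X)%MS -> (e3 <= X *m f2)%MS.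
Proof.
have [g3 g3f3] := row_fullP ff3; move=> d3X.
rewrite -[e3]mul1mx -g3f3 -mulmxA -f2d3 mulmxA.
exact: submxMr (submx_trans (submxMl _ _) d3X).
Qed.

Lemma rank_target_cycles :
  \rank (kermx e2 *m 1%:M + e3)%MS = \rank (kermx (d2 *m f1) *m f2).
Proof.
have [g2 g2f2] := row_fullP ff2.
apply/eqmx_rank/andP; split.
  rewrite addsmx_sub boundary_sub_image ?andbT; last first.
    by rewrite sub_kermx mulmxA d3d2 mul0mx.
  rewrite mulmx1 -[kermx e2]mulmx1 -g2f2 mulmxA submxMr //.
  rewrite sub_kermx -mulmxA f1d2 !mulmxA -(mulmxA _ g2) g2f2 mulmx1.
  exact/eqP/mulmx_ker.
apply: submx_trans (addsmxSl _ _); rewrite mulmx1 sub_kermx -mulmxA -f1d2.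
by rewrite mulmx_ker.
Qed.

Lemma rank_cycles_image : \rank (kermx d2 *m f2 + e3)%MS = \rank (kermx d2 *m f2).
Proof.
apply/eqmx_rank/andP; split; last exact: addsmxSl.
by rewrite addsmx_sub submx_refl boundary_sub_image // sub_kermx d3d2.
Qed.

Lemma mxhimg_ladder :
  ((mxhimg (kermx e2) 1%:M e3 - mxhimg (kermx d2) f2 e3)
   + (mxhimg Z1 1%:M d2 - mxhimg Z1 f1 e2))%N
  = (\rank (kermx f1) - \rank (kermx f2 *m d2))%N.
Proof.
have f1M : row_full (1%:M : 'M[F]_c1) by rewrite -sub1mx.
rewrite (mxhimg_full e2 fZ1 ff1) (mxhimg_full d2 fZ1 f1M) /mxhimg.
rewrite rank_target_cycles rank_cycles_image.
set P := kermx (d2 *m f1); set Z2 := kermx d2; set K2 := kermx f2.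
have K2P : (K2 <= P)%MS by rewrite sub_kermx f1d2 mulmxA mulmx_ker mul0mx.
have rPf2 := mxrank_mul_ker P f2.
have rPK2 : \rank (P :&: K2)%MS = \rank K2.
  by apply/eqmx_rank/andP; rewrite capmxSr sub_capmx K2P submx_refl.
have rZ2f2 := mxrank_mul_ker Z2 f2; rewrite -/K2 in rPf2 rZ2f2.
have rK2d2 := mxrank_mul_ker K2 d2.
have rZ2K2 : \rank (K2 :&: kermx d2)%MS = \rank (Z2 :&: K2)%MS by rewrite capmxC.
have rP : \rank P = (c2 - \rank e2)%N.
  by rewrite mxrank_ker f1d2 (eqmxMfull _ ff2).
have rZ2 : \rank Z2 = (c2 - \rank d2)%N by rewrite mxrank_ker.
have rK1 : \rank (kermx f1) = (c1 - b1)%N by rewrite mxrank_ker (eqP ff1).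
have rd2f1 := mxrank_mul_ker d2 f1.
have rd2K1 : (\rank (d2 :&: kermx f1)%MS <= \rank (kermx f1))%N.
  by rewrite mxrankS ?capmxSr.
have re2 : \rank (d2 *m f1) = \rank e2 by rewrite f1d2 (eqmxMfull _ ff2).
have re3 : (\rank e3 <= \rank (Z2 *m f2))%N.
  by rewrite mxrankS ?boundary_sub_image // sub_kermx d3d2.
have rZ2P : (\rank (Z2 *m f2) <= \rank (P *m f2))%N.
  by rewrite mxrankS ?submxMr // sub_kermx mulmxA mulmx_ker mul0mx.
have := rank_leq_row d2; have := rank_leq_col d2; have := rank_leq_col e2.
have := rank_leq_row f1; rewrite (eqP ff1).
lia.
Qed.

End HomologyLadder.

Section CongruenceModSubspace.
Variables (F : fieldType) (k n : nat) (V : 'M[F]_(k, n)).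

Definition congmx (a b : 'rV[F]_n) := (a - b <= V)%MS.

Lemma congmx_refl a : congmx a a.
Proof. by rewrite /congmx subrr sub0mx. Qed.

Lemma congmx_trans a b c : congmx a b -> congmx b c -> congmx a c.
Proof. by rewrite /congmx -[a - c](subrKA b); apply: addmx_sub. Qed.

Lemma congmxD a b a' b' : congmx a b -> congmx a' b' -> congmx (a + a') (b + b').
Proof. by rewrite /congmx opprD addrACA; apply: addmx_sub. Qed.

Lemma congmxZ c a b : congmx a b -> congmx (c *: a) (c *: b).
Proof. by rewrite /congmx -scalerBr; apply: scalemx_sub. Qed.

Lemma congmx_sum (I : finType) (c : I -> F) (a b : I -> 'rV[F]_n) :
  (forall i, congmx (a i) (b i)) -> congmx (\sum_i c i *: a i) (\sum_i c i *: b i).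
Proof.
move=> ab; apply: (big_ind2 congmx); first exact: congmx_refl.
  by move=> *; apply: congmxD.
by move=> i _; apply: congmxZ.
Qed.

End CongruenceModSubspace.

Section BarComplex.
Variable p : nat.

Definition tup_map (gT rT : finGroupType) n (f : gT -> rT) (t : tup gT n) : tup rT n :=
  [ffun j => f (t j)].

Definition bar (gT : finGroupType) n (t : tup gT n) : 'rV['F_p]_(#|{: tup gT n}|) :=
  delta_mx 0 (enum_rank t).

Lemma bar_mapmx (gT rT : finGroupType) n (f : gT -> rT) (t : tup gT n) :
  bar t *m mapmx p n f = bar (tup_map f t).
Proof. by rewrite /bar -rowE /mapmx rowK enum_rankK. Qed.

Lemma bar_bd (gT : finGroupType) n (t : tup gT n.+1) :
  bar t *m bd p gT n = \sum_(k < n.+2) ((-1) ^+ k) *: bar (face k t).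
Proof. by rewrite /bar -rowE /bd rowK enum_rankK. Qed.

Lemma bar_mxP (gT : finGroupType) n m (A B : 'M['F_p]_(#|{: tup gT n}|, m)) :
  (forall t, bar t *m A = bar t *m B) -> A = B.
Proof.
move=> eqAB; apply/row_matrixP => i; rewrite !rowE.
by have := eqAB (enum_val i); rewrite /bar enum_valK.
Qed.

Lemma mapmx_comp (gT rT sT : finGroupType) n (f : gT -> rT) (g : rT -> sT) :
  mapmx p n f *m mapmx p n g = mapmx p n (g \o f).
Proof.
apply: bar_mxP => t; rewrite mulmxA !bar_mapmx; congr bar.
by apply/ffunP => j; rewrite !ffunE.
Qed.

Lemma mapmx_id (gT : finGroupType) n (f : gT -> gT) : f =1 id -> mapmx p n f = 1%:M.
Proof.
move=> fE; apply: bar_mxP => t; rewrite bar_mapmx mulmx1; congr bar.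
by apply/ffunP => j; rewrite !ffunE fE.
Qed.

Lemma mapmx_row_full (gT rT : finGroupType) n (f : gT -> rT) (s : rT -> gT) :
  cancel s f -> row_full (mapmx p n f).
Proof.
by move=> sK; apply/row_fullP; exists (mapmx p n s); rewrite mapmx_comp mapmx_id.
Qed.

Lemma face_tup_map (gT rT : finGroupType) n k (f : gT -> rT) (t : tup gT n.+1) :
  {morph f : x y / (x * y)%g} -> tup_map f (face k t) = face k (tup_map f t).
Proof.
move=> fM; apply/ffunP => j; rewrite !ffunE.
by case: ifP => _ //; case: ifP => _ //; rewrite fM.
Qed.

Lemma bd_mapmx (gT rT : finGroupType) n (f : gT -> rT) :
  {morph f : x y / (x * y)%g} -> bd p gT n *m mapmx p n f = mapmx p n.+1 f *m bd p rT n.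
Proof.
move=> fM; apply: bar_mxP => t; rewrite !mulmxA bar_mapmx !bar_bd mulmx_suml.
by apply: eq_bigr => k _; rewrite -scalemxAl bar_mapmx face_tup_map.
Qed.

Lemma bd0 (gT : finGroupType) : bd p gT 0 = 0.
Proof.
apply: bar_mxP => t; rewrite bar_bd mulmx0 big_ord_recl big_ord1 /=.
have -> : face 1 t = face 0 t by apply/ffunP => -[].
by rewrite expr1 scaleN1r expr0 scale1r subrr.
Qed.

Definition tup1 (gT : finGroupType) (x : gT) : tup gT 1 := [ffun _ => x].
Definition tup2 (gT : finGroupType) (x y : gT) : tup gT 2 :=
  [ffun j => if val j == 0%N then x else y].
Definition tup3 (gT : finGroupType) (x y z : gT) : tup gT 3 :=
  [ffun j => if val j == 0%N then x else if val j == 1%N then y else z].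

Section LowDegree.
Variable gT : finGroupType.

Lemma tup1E (t : tup gT 1) : t = tup1 (t ord0).
Proof. by apply/ffunP => j; rewrite ffunE ord1. Qed.

Lemma tup2E (t : tup gT 2) : t = tup2 (t ord0) (t ord_max).
Proof.
by apply/ffunP => -[[|[|//]] lt_j2]; rewrite ffunE /=; congr (t _); apply: val_inj.
Qed.

Lemma tup3E (t : tup gT 3) : t = tup3 (t ord0) (t (inord 1)) (t ord_max).
Proof.
apply/ffunP => -[[|[|[|//]]] lt_j3]; rewrite ffunE /=.
all: by congr (t _); apply: val_inj; rewrite //= inordK.
Qed.

Lemma tup_map1 (rT : finGroupType) (f : gT -> rT) x : tup_map f (tup1 x) = tup1 (f x).
Proof. by apply/ffunP => j; rewrite !ffunE. Qed.

Lemma tup_map2 (rT : finGroupType) (f : gT -> rT) x y :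
  tup_map f (tup2 x y) = tup2 (f x) (f y).
Proof. by apply/ffunP => j; rewrite !ffunE; case: ifP. Qed.

Lemma bar_bd2 x y :
  bar (tup2 x y) *m bd p gT 1 = bar (tup1 y) - bar (tup1 (x * y)%g) + bar (tup1 x).
Proof.
rewrite bar_bd !big_ord_recr big_ord0 /= add0r.
have -> : face 0 (tup2 x y) = tup1 y.
  by apply/ffunP => j; rewrite !ffunE ord1 /= inordK.
have -> : face 1 (tup2 x y) = tup1 (x * y)%g.
  by apply/ffunP => j; rewrite !ffunE ord1 /= !inordK.
have -> : face 2 (tup2 x y) = tup1 x.
  by apply/ffunP => j; rewrite !ffunE ord1 /= !inordK.
by rewrite expr0 expr1 scale1r scaleN1r sqrrN expr1n scale1r.
Qed.

Lemma bd_bd : bd p gT 2 *m bd p gT 1 = 0.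
Proof.
apply: bar_mxP => t; rewrite mulmx0 mulmxA bar_bd mulmx_suml.
rewrite !big_ord_recr big_ord0 /= add0r (tup3E t).
set a := t ord0; set b := t (inord 1); set c := t ord_max.
have -> : face 0 (tup3 a b c) = tup2 b c.
  by apply/ffunP => -[[|[|//]] ?]; rewrite !ffunE /= !inordK.
have -> : face 1 (tup3 a b c) = tup2 (a * b)%g c.
  by apply/ffunP => -[[|[|//]] ?]; rewrite !ffunE /= !inordK.
have -> : face 2 (tup3 a b c) = tup2 a (b * c)%g.
  by apply/ffunP => -[[|[|//]] ?]; rewrite !ffunE /= !inordK.
have -> : face 3 (tup3 a b c) = tup2 a b.
  by apply/ffunP => -[[|[|//]] ?]; rewrite !ffunE /= !inordK.
rewrite -!scalemxAl !bar_bd2 -mulgA.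
rewrite expr0 expr1 scale1r !scaleN1r sqrrN expr1n scale1r.
rewrite exprS expr2 mulN1r mulrN1 opprK scaleN1r !opprD !opprK !addrA.
(* the twelve face terms cancel in pairs *)
rewrite (ACl ((1*4)*(3*10)*(9*12)*(7*2)*(5*8)*(11*6))%AC) /=.
by rewrite !subrr !addr0.
Qed.

End LowDegree.

End BarComplex.

Lemma himg_ladder p (Q R : finGroupType) (f : Q -> R) (s : R -> Q)
    (idQ : Q -> Q) (idR : R -> R) :
  {morph f : x y / (x * y)%g} -> cancel s f -> idQ =1 id -> idR =1 id ->
  ((himg p 2 idR - himg p 2 f) + (himg p 1 idQ - himg p 1 f))%N =
  (\rank (kermx (mapmx p 1 f)) - \rank (kermx (mapmx p 2 f) *m bd p Q 1))%N.
Proof.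
move=> fM sK idQE idRE; rewrite /himg !mapmx_id //.
apply: (mxhimg_ladder (d3 := bd p Q 2) (f3 := mapmx p 3 f));
  rewrite ?bd_bd ?bd_mapmx //; try exact: mapmx_row_full sK.
by rewrite /= bd0 -sub1mx kermx0.
Qed.

(* Modulo the boundaries [W] of 2-chains killed by f, the 1-chains killed by f
   form a copy of M: this is the middle term of the five-term sequence, and
   [ker_coord] sends the 1-chain [x] to the coordinates of s (f x)^-1 * x. *)
Section CentralExponentKernel.
Variables (p : nat) (Q R : finGroupType) (f : Q -> R) (s : R -> Q).
Hypotheses (p_pr : prime p) (fM : {morph f : x y / (x * y)%g}) (sK : cancel s f).
Hypotheses (ker_cent : forall x y, f x = 1%g -> commute x y)
           (ker_exp : forall x, f x = 1%g -> (x ^+ p = 1)%g).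

Definition split_morphism : {morphism [set: Q] >-> R} := Morphism (in2W fM).
Local Notation M := ('ker split_morphism)%G.
Local Notation K1 := (kermx (mapmx p 1 f)).
Local Notation W := (kermx (mapmx p 2 f) *m bd p Q 1).

Let f1 : f 1%g = 1%g := morph1 split_morphism.
Let fV x : f x^-1%g = (f x)^-1%g := morphV split_morphism (in_setT x).

Lemma mem_split_ker x : (x \in M) = (f x == 1%g).
Proof. by apply/idP/eqP => [/mker //|]; move/(kerP split_morphism (in_setT x)). Qed.

Lemma abelem_split_ker : (p.-abelem M)%g.
Proof.
apply/(abelemP p_pr); split; last first.
  by move=> x; rewrite mem_split_ker => /eqP; apply: ker_exp.
by apply/centsP => x; rewrite mem_split_ker => /eqP fx y _; apply: ker_cent.
Qed.

Lemma boundaries_sub_ker : (W <= K1)%MS.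
Proof. by rewrite sub_kermx -mulmxA bd_mapmx // mulmxA mulmx_ker mul0mx. Qed.

Definition ker_part x := ((s (f x))^-1 * x)%g.

Lemma ker_part_in x : ker_part x \in M.
Proof. by rewrite mem_split_ker /ker_part fM fV sK mulVg. Qed.

Lemma rank_ker_trivial : (M :=: 1)%g -> \rank K1 = 0%N.
Proof.
move=> M1; apply/eqP; rewrite mxrank_eq0 kermx_eq0; apply/row_freeP.
exists (mapmx p 1 s); rewrite mapmx_comp; apply: mapmx_id => x /=.
have := ker_part_in x; rewrite M1 inE => /eqP/(canRL (mulKVg _)).
by rewrite mulg1.
Qed.

Section NontrivialKernel.
Hypothesis ntM : (M != 1 :> {set Q})%g.
Local Notation rv := (abelem_rV abelem_split_ker ntM).
Local Notation vr := (rVabelem abelem_split_ker ntM).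
Local Notation congW := (congmx W).

Definition section_cocycle (u v : R) := ((s u * s v)^-1 * s (u * v))%g.

Lemma ker_part_cocycle a b :
  (ker_part a * ker_part b * (ker_part (a * b))^-1)%g = section_cocycle (f a) (f b).
Proof.
rewrite /section_cocycle /ker_part fM.
set A := s (f a); set B := s (f b); set ma := (A^-1 * a)%g; set mb := (B^-1 * b)%g.
have cma : commute ma B.
  by apply: ker_cent; move: (ker_part_in a); rewrite mem_split_ker => /eqP.
have -> : (a * b = (A * B) * (ma * mb))%g.
  by rewrite -{1}[a](mulKVg A) -{1}[b](mulKVg B) -/ma -/mb mulgA -(mulgA A) cma !mulgA.
by rewrite invMg invgK (invMg (A * B)%g) !mulgA mulgV mul1g.
Qed.

Definition ker_coord : 'M['F_p]_(#|{: tup Q 1}|, 'dim M) :=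
  \matrix_(i < #|{: tup Q 1}|) rv (ker_part (enum_val i ord0)).

Definition cocycle_mx : 'M['F_p]_(#|{: tup R 2}|, 'dim M) :=
  \matrix_(i < #|{: tup R 2}|)
    rv (section_cocycle (enum_val i ord0) (enum_val i ord_max)).

Lemma bar_ker_coord x : bar p (tup1 x) *m ker_coord = rv (ker_part x).
Proof. by rewrite /bar -rowE /ker_coord rowK enum_rankK ffunE. Qed.

Lemma bd_ker_coord : bd p Q 1 *m ker_coord = mapmx p 2 f *m cocycle_mx.
Proof.
apply: bar_mxP => t; rewrite (tup2E t) !mulmxA bar_bd2 bar_mapmx tup_map2.
set a := t ord0; set b := t ord_max.
rewrite mulmxDl mulmxBl !bar_ker_coord /bar -rowE /cocycle_mx rowK enum_rankK !ffunE /=.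
have Ma := ker_part_in a; have Mb := ker_part_in b; have Mab := ker_part_in (a * b)%g.
rewrite -ker_part_cocycle (abelem_rV_M _ _ (groupM Ma Mb)) ?groupV //.
by rewrite (abelem_rV_M _ _ Ma Mb) (abelem_rV_V _ _ Mab) addrC addrA.
Qed.

Lemma boundaries_ker_coord : W *m ker_coord = 0.
Proof. by rewrite -mulmxA bd_ker_coord mulmxA mulmx_ker mul0mx. Qed.

Definition ker_chain (m : Q) := bar p (tup1 m) - bar p (tup1 1%g).

Lemma ker_chain_sub m : m \in M -> (ker_chain m <= K1)%MS.
Proof.
rewrite mem_split_ker => /eqP fm1.
by rewrite sub_kermx mulmxBl !bar_mapmx !tup_map1 fm1 f1 subrr.
Qed.

Lemma ker_chain_coord m : m \in M -> ker_chain m *m ker_coord = rv m.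
Proof.
move=> Mm; rewrite mulmxBl !bar_ker_coord /ker_part mulg1.
have /eqP fm1 : f m == 1%g by rewrite -mem_split_ker.
have Ms : ((s 1)^-1)%g \in M by rewrite mem_split_ker fV sK invg1.
by rewrite fm1 abelem_rV_M // f1 [X in X - _]addrC addrK.
Qed.

Lemma rank_ker_coord : \rank (K1 *m ker_coord) = 'dim M.
Proof.
apply/eqP; change (row_full (K1 *m ker_coord)); rewrite -sub1mx.
apply/row_subP => i; rewrite row1 -(rVabelemK abelem_split_ker ntM (delta_mx 0 i)).
by rewrite -ker_chain_coord ?submxMr ?ker_chain_sub ?mem_rVabelem.
Qed.

Lemma bar_congr_ker_part x :
  congW (bar p (tup1 x) - bar p (tup1 (s (f x)))) (ker_chain (ker_part x)).
Proof.
set y := bar p (tup2 (s (f x)) (ker_part x)) - bar p (tup2 (s (f x)) 1%g).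
have /eqP fmx : f (ker_part x) == 1%g by rewrite -mem_split_ker ker_part_in.
have yK : (y <= kermx (mapmx p 2 f))%MS.
  by rewrite sub_kermx mulmxBl !bar_mapmx !tup_map2 fmx f1 subrr.
have := submxMr (bd p Q 1) yK; rewrite /y mulmxBl !bar_bd2 mulg1 /ker_part mulKVg.
rewrite /congmx /ker_chain -(eqmx_opp (_ - _)) subrK.
set bx := bar p (tup1 x); set bk := bar p (tup1 (_ * x)%g).
by rewrite !opprD !opprK !addrA (addrC (- bk)) (addrAC bx).
Qed.

Lemma ker_chainM m m' : m \in M -> m' \in M ->
  congW (ker_chain m + ker_chain m') (ker_chain (m * m')%g).
Proof.
rewrite !mem_split_ker => /eqP fm1 /eqP fm1'.
set y := bar p (tup2 m m') - bar p (tup2 1%g 1%g).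
have yK : (y <= kermx (mapmx p 2 f))%MS.
  by rewrite sub_kermx mulmxBl !bar_mapmx !tup_map2 fm1 fm1' f1 subrr.
have := submxMr (bd p Q 1) yK; rewrite /y mulmxBl !bar_bd2 mulg1 subrK.
rewrite /congmx /ker_chain.
set b1 := bar p (tup1 1%g); set bm := bar p (tup1 m); set bm' := bar p (tup1 m').
rewrite !opprD !opprK !addrA (addrAC _ (- _) b1) subrK.
by rewrite (addrAC bm) (addrAC (bm + bm')) (addrC bm) (addrAC bm').
Qed.

Definition ker_vec (v : 'rV['F_p]_('dim M)) := ker_chain (vr v).

Lemma ker_vec0 : ker_vec 0 = 0.
Proof. by rewrite /ker_vec rVabelem0 /ker_chain subrr. Qed.

Lemma ker_vecD a b : congW (ker_vec a + ker_vec b) (ker_vec (a + b)).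
Proof. by rewrite /ker_vec rVabelemD; apply: ker_chainM; apply: mem_rVabelem. Qed.

Lemma ker_vecZ c a : congW (c *: ker_vec a) (ker_vec (c *: a)).
Proof.
rewrite -[c]natr_Zp !scaler_nat; elim: (c : nat) => [|k IHk].
  by rewrite !mulr0n ker_vec0; apply: congmx_refl.
rewrite !mulrS; apply: congmx_trans (ker_vecD _ _).
by apply: congmxD IHk; apply: congmx_refl.
Qed.

Lemma ker_vec_sum (I : finType) (c : I -> 'F_p) (v : I -> 'rV['F_p]_('dim M)) :
  congW (\sum_i c i *: ker_vec (v i)) (ker_vec (\sum_i c i *: v i)).
Proof.
apply: (big_ind2 (fun a b => congW a (ker_vec b))).
- by rewrite ker_vec0; apply: congmx_refl.
- by move=> a1 a2 b1 b2 h1 h2; apply: congmx_trans (congmxD h1 h2) (ker_vecD _ _).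
- by move=> i _; apply: ker_vecZ.
Qed.

Let pt (j : 'I_#|{: tup Q 1}|) : Q := enum_val j ord0.

Lemma delta_bar1 j : delta_mx 0 j = bar p (tup1 (pt j)).
Proof. by rewrite /bar -tup1E enum_valK. Qed.

Lemma ker_mapmx1_expand (k : 'rV['F_p]_(#|{: tup Q 1}|)) : k *m mapmx p 1 f = 0 ->
  k = \sum_j k 0 j *: (bar p (tup1 (pt j)) - bar p (tup1 (s (f (pt j))))).
Proof.
move=> kf; have secE j :
    bar p (tup1 (s (f (pt j)))) = delta_mx 0 j *m (mapmx p 1 f *m mapmx p 1 s).
  by rewrite delta_bar1 mulmxA !bar_mapmx !tup_map1.
under eq_bigr do rewrite secE -delta_bar1 scalerBr scalemxAl.
by rewrite sumrB -mulmx_suml -row_sum_delta mulmxA kf mul0mx subr0.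
Qed.

Lemma ker_cap_coord_sub : (K1 :&: kermx ker_coord <= W)%MS.
Proof.
apply/row_subP => i; set k := row i _.
have kK : (k <= K1 :&: kermx ker_coord)%MS := row_sub i _.
have /sub_kermxP kf : (k <= K1)%MS by rewrite (submx_trans kK) ?capmxSl.
have /sub_kermxP kc : (k <= kermx ker_coord)%MS by rewrite (submx_trans kK) ?capmxSr.
have kcE : k *m ker_coord = \sum_j k 0 j *: rv (ker_part (pt j)).
  rewrite {1}(row_sum_delta k) mulmx_suml; apply: eq_bigr => j _.
  by rewrite -scalemxAl delta_bar1 bar_ker_coord.
rewrite -[k]subr0 -ker_vec0 -kc kcE; rewrite {1}(ker_mapmx1_expand kf).
apply: congmx_trans (congmx_sum _ (fun j => bar_congr_ker_part (pt j))) _.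
under eq_bigr => j _ do rewrite -[ker_part (pt j)]
  (abelem_rV_K abelem_split_ker ntM (ker_part_in _)) -/(ker_vec _).
exact: ker_vec_sum.
Qed.

Lemma rank_ker_nontrivial : (\rank K1 - \rank W)%N = 'dim M.
Proof.
have rW : \rank (K1 :&: kermx ker_coord)%MS = \rank W.
  apply/eqmx_rank/andP; split; first exact: ker_cap_coord_sub.
  rewrite sub_capmx boundaries_sub_ker.
  exact/sub_kermxP/boundaries_ker_coord.
by rewrite -(mxrank_mul_ker K1 ker_coord) rW rank_ker_coord addnK.
Qed.

End NontrivialKernel.

Lemma rank_split_ker : (\rank K1 - \rank W)%N = logn p #|M|.
Proof.
have [M1|ntM] := eqVneq (M :> {set Q}) 1%g.
  by rewrite rank_ker_trivial ?M1 ?cards1 ?logn1 //; apply/eqP; rewrite M1.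
by rewrite (rank_ker_nontrivial ntM) (dim_abelemE abelem_split_ker ntM).
Qed.

End CentralExponentKernel.

Local Open Scope group_scope.

Lemma card_split_morphism (Q R : finGroupType) (f : Q -> R) (s : R -> Q)
    (fM : {morph f : x y / x * y}) :
  cancel s f -> #|Q| = (#|'ker (split_morphism fM)| * #|R|)%N.
Proof.
move=> sK; have imT : split_morphism fM @* [set: Q] = [set: R].
  by apply/setP => y; rewrite inE; apply/morphimP; exists (s y); rewrite ?sK.
have := card_morphim (split_morphism fM) [set: Q]; rewrite imT setIid cardsT => ->.
by rewrite -cardsT -(Lagrange (subsetT ('ker (split_morphism fM)))).
Qed.

Lemma card_subg_of (gT : finGroupType) (H : {group gT}) : #|{: subg_of H}| = #|H|.
Proof. by rewrite card_sub; apply: eq_card => x; rewrite inE. Qed.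

Lemma sgvalX (gT : finGroupType) (H : {group gT}) (x : subg_of H) n :
  sgval (x ^+ n) = sgval x ^+ n.
Proof. by elim: n => [|n IHn] //; rewrite !expgS -IHn. Qed.

Section QuotientMap.
Variables (gT : finGroupType) (G : {group gT}).

Lemma subg_quotientP (A : {group gT}) (x : subg_of (G / A)) :
  exists2 g, g \in G & x = subg (G / A) (coset A g).
Proof. by have /morphimP[g _ Gg gx] := subgP x; exists g; rewrite // -gx sgvalK. Qed.

Lemma qmapE (A B : {group gT}) g : A <| G -> B <| G -> A \subset B -> g \in G ->
  @qmap _ G A B (subg (G / A) (coset A g)) = subg (G / B) (coset B g).
Proof.
move=> /andP[_ nAG] /andP[_ nBG] sAB Gg; rewrite /qmap subgK ?mem_quotient //.
have := mem_repr_coset (coset A g); rewrite val_coset ?(subsetP nAG) //.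
by case/rcosetP => a Aa ->; rewrite coset_kerl ?(subsetP sAB).
Qed.

Lemma qmap_id (A : {group gT}) : A <| G -> @qmap _ G A A =1 id.
Proof. by move=> nAG x; have [g Gg ->] := subg_quotientP x; rewrite qmapE. Qed.

End QuotientMap.

Section CentralStep.
Variables (p : nat) (gT : finGroupType) (G N1 N2 : {group gT}).
Hypotheses (p_pr : prime p) (nN1G : N1 <| G) (nN2G : N2 <| G) (sN12 : N1 \subset N2).
Hypotheses (cN2G : [~: N2, G] \subset N1) (expN2 : forall x, x \in N2 -> x ^+ p \in N1).

Local Notation q := (@qmap _ G N1 N2).

Let sN2G : N2 \subset G := normal_sub nN2G.
Let nGN1 : G \subset 'N(N1) := normal_norm nN1G.
Let nGN2 : G \subset 'N(N2) := normal_norm nN2G.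

Lemma qmapM : {morph q : x y / x * y}.
Proof.
move=> x y; have [g Gg ->] := subg_quotientP x; have [h Gh ->] := subg_quotientP y.
have [nN1g nN1h] := (subsetP nGN1 _ Gg, subsetP nGN1 _ Gh).
have [nN2g nN2h] := (subsetP nGN2 _ Gg, subsetP nGN2 _ Gh).
rewrite -subgM ?mem_quotient // -morphM // !qmapE ?groupM //.
by rewrite -subgM ?mem_quotient // -morphM.
Qed.

Definition qmap_section (y : subg_of (G / N2)) : subg_of (G / N1) :=
  subg (G / N1) (coset N1 (repr (sgval y))).

Lemma qmap_sectionK : cancel qmap_section q.
Proof.
move=> y; have [h Gh ->] := subg_quotientP y.
rewrite /qmap_section subgK ?mem_quotient //.
have Grepr : repr (coset N2 h) \in G.
  have := mem_repr_coset (coset N2 h); rewrite val_coset ?(subsetP nGN2) //.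
  by case/rcosetP => a N2a ->; rewrite groupM // (subsetP sN2G).
by rewrite qmapE // coset_reprK.
Qed.

Lemma qmap_ker x : q x = 1 -> exists2 g, g \in N2 & x = subg (G / N1) (coset N1 g).
Proof.
have [g Gg ->] := subg_quotientP x; rewrite qmapE // => /(congr1 sgval).
rewrite subgK ?mem_quotient // => /coset_idr gN2.
by exists g => //; apply: gN2; apply: (subsetP nGN2).
Qed.

Lemma qmap_ker_central x y : q x = 1 -> commute x y.
Proof.
move/qmap_ker => [g N2g ->]; have [h Gh ->] := subg_quotientP y.
have Gg := subsetP sN2G _ N2g.
have [nN1g nN1h] := (subsetP nGN1 _ Gg, subsetP nGN1 _ Gh).
rewrite /commute -!subgM ?mem_quotient // -!morphM //.
by rewrite /= commgC coset_kerr // (subsetP cN2G) // mem_commg.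
Qed.

Lemma qmap_ker_exp x : q x = 1 -> x ^+ p = 1.
Proof.
move/qmap_ker => [g N2g ->]; have Gg := subsetP sN2G _ N2g.
apply: subg_inj; rewrite sgvalX subgK ?mem_quotient //.
by rewrite -morphX ?(subsetP nGN1) //= coset_id ?expN2.
Qed.

Lemma logn_card_qmap_ker :
  logn p #|'ker (split_morphism qmapM)| = (logn p #|N2| - logn p #|N1|)%N.
Proof.
have := card_split_morphism qmapM qmap_sectionK; rewrite !card_subg_of.
rewrite !card_quotient ?normal_norm // => cardG.
have : (#|'ker (split_morphism qmapM)| * #|N1| = #|N2|)%N.
  apply/eqP; rewrite -(eqn_pmul2r (indexg_gt0 G N2)) -mulnA (mulnC #|N1|) mulnA -cardG.
  by rewrite (mulnC #|G : N1|) !Lagrange ?normal_sub.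
by move <-; rewrite lognM ?cardG_gt0 // addnK.
Qed.

Lemma himg_central_step :
  ((himg p 2 (@qmap _ G N2 N2) - himg p 2 q)
   + (himg p 1 (@qmap _ G N1 N1) - himg p 1 q))%N
  = (logn p #|N2| - logn p #|N1|)%N.
Proof.
rewrite (himg_ladder p qmapM qmap_sectionK (qmap_id nN1G) (qmap_id nN2G)).
by rewrite (rank_split_ker p_pr qmapM qmap_sectionK qmap_ker_central qmap_ker_exp)
  logn_card_qmap_ker.
Qed.

End CentralStep.

Section TrivialTarget.
Variables (p : nat) (X T : finGroupType) (g : X -> T).
Hypothesis T1 : #|T| = 1%N.

Let all1 (a : T) : a = 1%g.
Proof.
have /card1P[x xE] : #|T| == 1%N by rewrite T1.
by move: (xE a) (xE 1%g); rewrite !inE => /esym/eqP -> /esym/eqP ->.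
Qed.

Let card_tupT n : #|{: tup T n}| = 1%N.
Proof. by rewrite card_ffun T1 exp1n. Qed.

Lemma rank_bd1_trivial : \rank (bd p T 1) = 1%N.
Proof.
apply/eqP; rewrite eqn_leq (leq_trans (rank_leq_col _)) ?card_tupT // lt0n mxrank_eq0.
apply: contraNneq (oner_neq0 'F_p) => bd1_0.
have := bar_bd2 p (1%g : T) 1%g; rewrite bd1_0 mulmx0 mulg1 subrr add0r.
by move/matrixP/(_ ord0 (enum_rank (tup1 (1%g : T)))); rewrite !mxE !eqxx /= => ->.
Qed.

Lemma himg1_trivial : himg p 1 g = 0%N.
Proof.
apply/eqP; rewrite /himg rank_bd1_trivial subn_eq0.
by rewrite (leq_trans (rank_leq_col _)) ?card_tupT.
Qed.

Lemma himg2_trivial : himg p 2 g = 0%N.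
Proof.
have gM : {morph g : x y / (x * y)%g} by move=> x y; rewrite !(all1 (g _)) mulg1.
have bd1_free : row_free (bd p T 1) by rewrite /row_free rank_bd1_trivial card_tupT.
have cyc0 : \rank (kermx (bd p X 1) *m mapmx p 2 g) = 0%N.
  rewrite -(mxrankMfree _ bd1_free) -mulmxA -bd_mapmx // mulmxA mulmx_ker mul0mx.
  exact: mxrank0.
apply/eqP; rewrite /himg /= subn_eq0.
by apply: leq_trans (mxrank_adds_leqif _ _) _; rewrite cyc0.
Qed.

End TrivialTarget.

Definition pentry (A : seq (seq nat)) k l := nth 0%N (nth [::] A k) l.

(* Entries outside the matrix read as 0; in degrees 1 and 2 this is also the
   value of [himg] for maps into the trivial quotient G / G one step past the end
   of the series (see [pentry_pmat]), so the last summand needs no special case. *)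
Definition logn_pmats (P1 P2 : seq (seq nat)) : nat :=
  \sum_(k < size P1) ((pentry P2 k.+1 k.+1 - pentry P2 k k.+1)
                      + (pentry P1 k k - pentry P1 k k.+1))%N.

Section CentralSeries.
Variables (p : nat) (gT : finGroupType) (G : {group gT}).
Variables (m : nat) (N : nat -> {group gT}).
Hypotheses (p_pr : prime p) (N0 : N 0 :=: 1%g) (Nm : N m :=: G).
Hypotheses (nNG : forall k, (k <= m)%N -> N k <| G)
           (sNS : forall k, (k < m)%N -> N k \subset N k.+1)
           (cNG : forall k, (k < m)%N -> [~: N k.+1, G] \subset N k)
           (expN : forall k, (k < m)%N -> forall x, x \in N k.+1 -> x ^+ p \in N k).

Lemma pentry_pmat n k l : (0 < n < 3)%N -> (k <= l <= m)%N ->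
  pentry (pmat p n G m N) k l = himg p n (@qmap _ G (N k) (N l)).
Proof.
move=> n12 /andP[le_kl le_lm]; have [lt_lm|] := ltnP l m.
  by rewrite /pentry /pmat !nth_mkseq ?le_kl // (leq_ltn_trans le_kl).
move=> /(conj le_lm)/andP; rewrite -eqn_leq => /eqP ->.
have T1 : #|{: subg_of (G / N m)}| = 1%N.
  by rewrite card_subg_of /= Nm quotientS1 ?cards1.
rewrite /pentry nth_default; last first.
  have [lt_km|le_mk] := ltnP k m; last by rewrite nth_default ?size_mkseq.
  by rewrite /pmat nth_mkseq // size_mkseq.
by case/andP: n12; case: n => [|[|[|]]] //= _ _; rewrite ?himg1_trivial ?himg2_trivial.
Qed.

Lemma logn_series : logn p #|G| = logn_pmats (pmat p 1 G m N) (pmat p 2 G m N).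
Proof.
have mono k : (0 <= k < m)%N -> (logn p #|N k| <= logn p #|N k.+1|)%N.
  by case/andP=> _ lt_km; rewrite dvdn_leq_log ?cardG_gt0 ?cardSg ?sNS.
have := telescope_sumn_in (leq0n m) mono.
rewrite Nm N0 cards1 logn1 subn0 => <-.
rewrite /logn_pmats size_mkseq big_mkord; apply: eq_bigr => -[k lt_km] _ /=.
have le_km := ltnW lt_km.
rewrite !pentry_pmat ?leqnn ?leqnSn ?lt_km ?le_km //.
by rewrite himg_central_step ?nNG ?sNS ?cNG //; apply: expN.
Qed.

End CentralSeries.

Local Close Scope ring_scope.

Lemma find_iota_sat (P : pred nat) n : P n -> P (find P (iota 0 n.+1)).
Proof.
move=> Pn; have hasP_iota : has P (iota 0 n.+1).
  by apply/hasP; exists n; rewrite // mem_iota add0n ltnSn.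
have := nth_find 0%N hasP_iota; rewrite nth_iota ?add0n //.
by rewrite -[n.+1 in X in (_ < X)%N](size_iota 0) -has_find.
Qed.

Lemma normsX_imset (gT : finGroupType) (G L : {group gT}) n :
  G \subset 'N(L) -> G \subset 'N([set x ^+ n | x in L]).
Proof.
move=> nLG; apply/subsetP => g Gg; rewrite inE; apply/subsetP => y.
rewrite mem_conjg => /imsetP[x Lx xE]; apply/imsetP; exists (x ^ g).
  by rewrite memJ_norm ?(subsetP nLG).
by rewrite -conjXg -xE conjgKV.
Qed.

Section LowerPCentral.
Variables (p : nat) (gT : finGroupType) (G : {group gT}).
Hypotheses (p_pr : prime p) (pG : p.-group G).
Local Notation L := (lpcs p G).

Lemma lpcsR j : [~: L j, G] \subset L j.+1.
Proof. by rewrite sub_gen // subsetUl. Qed.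

Lemma lpcsX j x : x \in L j -> x ^+ p \in L j.+1.
Proof.
by move=> Lx; apply: (subsetP (sub_gen (subsetUr _ _))); apply/imsetP; exists x.
Qed.

Lemma lpcs_succ_sub j : G \subset 'N(L j) -> L j.+1 \subset L j.
Proof.
move=> nLG; rewrite /= gen_subG subUset commg_subl nLG /=.
by apply/subsetP => _ /imsetP[x Lx ->]; rewrite groupX.
Qed.

Lemma lpcs_normal j : L j <| G.
Proof.
elim: j => [|j /andP[sLG nLG]]; first exact: normal_refl.
rewrite /normal (subset_trans (lpcs_succ_sub nLG) sLG) /=.
by rewrite norms_gen // normsU ?commg_normr ?normsX_imset.
Qed.

Lemma lpcsS j : L j.+1 \subset L j.
Proof. exact/lpcs_succ_sub/normal_norm/lpcs_normal. Qed.

Lemma lpcs_succ_sub_index_p (K : {group gT}) j :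
  K <| G -> K \subset L j -> #|L j / K| = p -> L j.+1 \subset K.
Proof.
move=> /andP[sKG nKG] sKL cardLK.
have nKL := subset_trans (normal_sub (lpcs_normal j)) nKG.
rewrite /= gen_subG subUset; apply/andP; split.
  (* L j / K has order p and is normal in the p-group G / K, hence central. *)
  rewrite -quotient_cents2 //; apply: subset_trans (subsetIr (G / K) _).
  apply: prime_meetG; first by rewrite cardLK.
  have nilGK := quotient_nil K (pgroup_nil pG).
  have nLKGK := quotient_normal K (lpcs_normal j).
  apply: contraTneq (prime_gt1 p_pr) => /(TI_center_nil nilGK nLKGK) LK1.
  by rewrite -cardLK LK1 cards1.
apply/subsetP => _ /imsetP[x Lx ->]; have nKx := subsetP nKL x Lx.
apply: coset_idr; first exact: groupX.
by rewrite morphX // -cardLK expg_cardG // mem_quotient.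
Qed.

Lemma lpcs_proper j : L j :!=: 1 -> #|L j.+1| < #|L j|.
Proof.
move=> ntL; have pL : p.-group (L j) := pgroupS (normal_sub (lpcs_normal j)) pG.
have lognL_gt0 : 0 < logn p #|L j|.
  rewrite lt0n; apply: contra ntL => /eqP l0.
  by rewrite trivg_card1 (card_pgroup pL) l0.
have [K [sKL nKG cardK]] := normal_pgroup pG (lpcs_normal j) (leq_pred (logn p #|L j|)).
have nKL := subset_trans (normal_sub (lpcs_normal j)) (normal_norm nKG).
have cardLK : #|L j / K| = p.
  rewrite card_quotient // -divgS // cardK {1}(card_pgroup pL) -(prednK lognL_gt0).
  by rewrite expnS mulnK // expn_gt0 prime_gt0.
apply: leq_ltn_trans (subset_leq_card (lpcs_succ_sub_index_p nKG sKL cardLK)) _.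
by rewrite cardK {2}(card_pgroup pL) ltn_exp2l ?prime_gt1 // prednK.
Qed.

Lemma lpcs_card_trivial : L #|G| :=: 1.
Proof.
have L1S j : L j :=: 1 -> L j.+1 :=: 1.
  by move=> L1; apply/trivgP; rewrite -L1 lpcsS.
have L_inv j : (L j == 1 :> {set gT}) || (j + #|L j| <= #|G|)%N.
  elim: j => [|j /orP[/eqP/L1S -> | le_jL]]; first by rewrite /= add0n leqnn orbT.
    by rewrite eqxx.
  case: eqP => //= ntL; apply: leq_trans le_jL; rewrite addSn -addnS leq_add2l.
  by apply: lpcs_proper; apply/eqP => /L1S.
by case/orP: (L_inv #|G|) => [/eqP //|]; have := cardG_gt0 (L #|G|); lia.
Qed.

Lemma lpcs_m_low : L (m_low p G) :=: 1.
Proof. exact/eqP/(find_iota_sat (P := fun i => L i :==: 1))/eqP/lpcs_card_trivial. Qed.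

Lemma logn_lower :
  logn p #|G| = logn_pmats (persistence p Lower 1 G) (persistence p Lower 2 G).
Proof.
apply: (logn_series (m := m_low p G) (N := fun k => L (m_low p G - k))) => //.
- by rewrite subn0 lpcs_m_low.
- by rewrite subnn.
- by move=> k _; apply: lpcs_normal.
- by move=> k lt_km; rewrite -(subnSK lt_km) lpcsS.
- by move=> k lt_km; rewrite -(subnSK lt_km) lpcsR.
- by move=> k lt_km x; rewrite -(subnSK lt_km); apply: lpcsX.
Qed.

End LowerPCentral.

Section UpperPCentral.
Variables (p : nat) (gT : finGroupType) (G : {group gT}).
Hypotheses (p_pr : prime p) (pG : p.-group G).
Local Notation Z := (upcs p G).

Definition center_exp (H : {group gT}) := [set x in 'Z(G / H) | x ^+ p == 1].

Lemma center_exp_gen (H : {group gT}) : <<center_exp H>> = center_exp H.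
Proof.
apply/gen_set_id/group_setP; split; first by rewrite inE group1 expg1n eqxx.
move=> x y /setIdP[Zx /eqP xp] /setIdP[Zy /eqP yp]; rewrite inE groupM //=.
by rewrite expgMn ?xp ?yp ?mulg1 //; apply: (centsP (center_abelian (G / H))).
Qed.

Lemma center_exp_sub (H : {group gT}) : <<center_exp H>> \subset 'Z(G / H).
Proof. by rewrite center_exp_gen; apply/subsetP => x /setIdP[]. Qed.

Lemma upcsE j : Z j.+1 = coset (Z j) @*^-1 <<center_exp (Z j)>> :> {set gT}.
Proof. by []. Qed.

Lemma upcs_normal j : Z j <| G.
Proof.
elim: j => [|j nZG]; first exact: normal1.
have : coset (Z j) @*^-1 <<center_exp (Z j)>> <| coset (Z j) @*^-1 (G / Z j).
  by rewrite cosetpre_normal sub_center_normal ?center_exp_sub.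
by rewrite quotientGK.
Qed.

Lemma upcsS j : Z j \subset Z j.+1.
Proof. by rewrite upcsE; apply: subset_trans (ker_sub_pre _ _); rewrite ker_coset. Qed.

Lemma upcsR j : [~: Z j.+1, G] \subset Z j.
Proof.
have nZG := normal_norm (upcs_normal j).
rewrite -quotient_cents2 //; last by rewrite upcsE subsetIl.
by rewrite upcsE cosetpreK; apply: subset_trans (center_exp_sub _) (subsetIr _ _).
Qed.

Lemma upcsX j x : x \in Z j.+1 -> x ^+ p \in Z j.
Proof.
rewrite upcsE => /morphpreP[nx]; rewrite center_exp_gen => /setIdP[_ /eqP xp].
by apply: coset_idr; rewrite ?groupX // morphX.
Qed.

Lemma upcs_proper j : Z j :!=: G -> #|Z j| < #|Z j.+1|.
Proof.
move=> ne; have /andP[sZG nZG] := upcs_normal j.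
have ntC : 'Z(G / Z j) != 1.
  rewrite (center_nil_eq1 (quotient_nil _ (pgroup_nil pG))).
  by apply: contra ne => /eqP/trivgP; rewrite quotient_sub1 // eqEsubset sZG => ->.
have pC : p.-group 'Z(G / Z j) := pgroupS (center_sub _) (quotient_pgroup _ pG).
have [_ /(Cauchy p_pr)[z Cz oz] _] := pgroup_pdiv pC ntC.
have [g nZg Gg ez] := morphimP (subsetP (center_sub _) z Cz).
apply: proper_card; rewrite properE upcsS; apply/subsetPn; exists g.
  rewrite upcsE; apply/morphpreP; split => //.
  by have := expg_order z; rewrite -ez center_exp_gen inE Cz oz => ->; rewrite eqxx.
apply/negP => Zg; have := prime_gt1 p_pr.
by rewrite -oz ez /= coset_id ?order1.
Qed.

Lemma upcs_card : Z #|G| :=: G.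
Proof.
have sZG j : Z j \subset G := normal_sub (upcs_normal j).
have Z_inv j : (Z j == G :> {set gT}) || (j < #|Z j|).
  elim: j => [|j /orP[/eqP ZG | lt_jZ]]; first by rewrite cardG_gt0 orbT.
    by rewrite eqEsubset sZG -{1}ZG upcsS.
  case: eqP => [// | ne]; rewrite orFb; apply: leq_ltn_trans lt_jZ (upcs_proper _).
  by apply/eqP => ZG; apply: ne; apply/eqP; rewrite eqEsubset sZG -{1}ZG upcsS.
case/orP: (Z_inv #|G|) => [/eqP //|]; have := subset_leq_card (sZG #|G|); lia.
Qed.

Lemma upcs_m_up : Z (m_up p G) :=: G.
Proof. exact/eqP/(find_iota_sat (P := fun i => Z i :==: G))/eqP/upcs_card. Qed.

Lemma logn_upper :
  logn p #|G| = logn_pmats (persistence p Upper 1 G) (persistence p Upper 2 G).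
Proof.
apply: (logn_series (m := m_up p G) (N := Z)) => //.
- exact: upcs_m_up.
- by move=> k _; apply: upcs_normal.
- by move=> k _; apply: upcsS.
- by move=> k _; apply: upcsR.
- by move=> k _; apply: upcsX.
Qed.

End UpperPCentral.

Theorem mainTheorem3 (p : nat) (hp : prime p) (F : pcseries)
    (gT gT' : finGroupType) (G : {group gT}) (G' : {group gT'}) :
  (p.-group G)%g -> (p.-group G')%g ->
  persistence p F 1 G = persistence p F 1 G' ->
  persistence p F 2 G = persistence p F 2 G' ->
  #|G| = #|G'|.
Proof.
move=> pG pG' eqP1 eqP2.
have logn_persistence (aT : finGroupType) (H : {group aT}) : p.-group H ->
    logn p #|H| = logn_pmats (persistence p F 1 H) (persistence p F 2 H).
  by case: F {eqP1 eqP2} => pH; [apply: logn_lower | apply: logn_upper].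
by rewrite (card_pgroup pG) (card_pgroup pG') !logn_persistence // eqP1 eqP2.
Qed.
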